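(* Let $W$ be a finite set of possible worlds, let $G_1=(2^W,\gg_1)$ and $G_2$ be belief algebras on $W$, let $\bullet$ be an operator on belief algebras on $W$ satisfying (RA1)–(RA6), and let $G_*=(2^W,\gg_* )=\operatorname{Com}(G_1)\bullet\operatorname{Com}(G_2)$. Then $G_1\bullet G_2=\operatorname{Gen}((G_1\cap G_* )\cup G_2)$, and $$G_1\cap G_*=\{(U,V)\mid U\gg_1 V \text{ and } I_*(U)\gg_* I_*(V)\},$$ where $I_*$ denotes the support with respect to the backbone of $G_*$.
   Context: $W$ is a finite nonempty set; $R_W=\{(U,V)\mid U,V\subseteq W,\ U\cap V=\varnothing\}$. A belief algebra on $W$ is a pair $(2^W,\gg)$, $\gg$ a binary relation on $2^W$, such that for all $U,V,U_1,V_1,U_2,V_2\subseteq W$: (A0) $\gg\subseteq R_W$; (A1) $U\gg\varnothing$ iff $U\neq\varnothing$; (A2) $U\gg V$ implies not $V\gg U$; (A3) if $U_1\supseteq U$, $U\gg V$, $V\supseteq V_1$, $U_1\cap V_1=\varnothing$ then $U_1\gg V_1$; (A4) if $U=U_1\cup V_1=U_2\cup V_2$, $U_1\gg V_1$, $U_2\gg V_2$ then $U_1\cap U_2\gg V_1\cup V_2$. Belief algebras are identified with their relations as sets of pairs ($\subseteq,\cup,\cap$ accordingly). $\operatorname{Gen}(\Omega)$ for $\Omega\subseteq R_W$ is the smallest subset of $R_W$ that contains $\Omega$, contains $(U,\varnothing)$ for each nonempty $U$, and is closed under: $(U,V)$ in it, $U\subseteq U_1$, $V_1\subseteq V$, $U_1\cap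 V_1=\varnothing$ imply $(U_1,V_1)$ in it; $U_1\cup V_1=U_2\cup V_2$ with $(U_1,V_1),(U_2,V_2)$ in it imply $(U_1\cap U_2,V_1\cup V_2)$ in it. For a total preorder $\preceq$ on $W$ ($\omega\prec\omega'$ iff $\omega\preceq\omega'$ and not $\omega'\preceq\omega$), the relation $U\gg V$ iff $U\cap V=\varnothing$ and some $\omega_1\in U$ has $\omega_1\prec\omega_2$ for all $\omega_2\in V$ is a belief algebra; these are the complete belief algebras (CBAs). Every belief algebra has a unique backbone: nonempty pairwise disjoint $U_1,\dots,U_n$ with union $W$, $U_i\gg U_{i+1}$ for $i<n$, and any two disjoint nonempty subsets of a single $U_i$ incomparable under $\gg$. The support $I(V)$ of nonempty $V\subseteq W$ is $U_i$ for the least $i$ with $V\cap U_i\neq\varnothing$. $\operatorname{Com}(G)$ is the unique CBA containing $G$ with the same backbone as $G$ (the CBA of the total preorder ranking worlds by the index of their backbone block). $G\leq G'$ means $G,G'$ have the same backbone and $G\subseteq G'$. Postulates (for all belief algebras $G_1=(2^W,\gg_1)$, $G_2$, $G_1'$, $G_2'$): (RA1) $G_2\subseteq G_1\bullet G_2$. (RA2) $G_1\bullet G_2=\operatorname{Gen}(\Omega)$ for some $\Omega\subseteq G_1\cup G_2$. (RA3) If $G_1,G_2$ are CBAs then so is $G_1\bullet G_2$. (RA4) If $G_1,G_2$ are CBAs and $I_2(\{\omega\})=I_2(\{\omega'\})$ (support w.r.t. the backbone of $G_2$), then $(\{\omega\},\{\omega'\})\in G_1\bullet G_2$ iff $\{\omega\}\gg_1\{\omega'\}$.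 (RA5) If $G_1\leq G_1'$ and $G_2\leq G_2'$ then $G_1\bullet G_2\subseteq G_1'\bullet G_2'$. (RA6) If $\Omega\subseteq G_1\cup G_2$, $\operatorname{Gen}(\Omega)\subseteq\operatorname{Com}(G_1)\bullet\operatorname{Com}(G_2)$ and $G_1\bullet G_2\subseteq\operatorname{Gen}(\Omega)$, then $G_1\bullet G_2=\operatorname{Gen}(\Omega)$. *)

From Stdlib Require Import ClassicalEpsilon.
From mathcomp Require Import all_boot.
Set Implicit Arguments. Unset Strict Implicit. Unset Printing Implicit Defensive.

Section BeliefAlgebras.
Variable W : finType.

Definition brel := {set {set W} * {set W}}.

Definition RW : brel := [set p : {set W} * {set W} | [disjoint p.1 & p.2]].

Definition belief_algebra (G : brel) : Prop :=
  G \subset RW /\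
  (forall U : {set W}, (U, set0) \in G <-> U != set0) /\
  (forall U V : {set W}, (U, V) \in G -> (V, U) \notin G) /\
  (forall U V U1 V1 : {set W},
              U \subset U1 -> (U, V) \in G -> V1 \subset V ->
              [disjoint U1 & V1] -> (U1, V1) \in G) /\
  (forall U U1 V1 U2 V2 : {set W},
              U = U1 :|: V1 -> U = U2 :|: V2 ->
              (U1, V1) \in G -> (U2, V2) \in G ->
              (U1 :&: U2, V1 :|: V2) \in G).

Definition gen_closed (Om S : brel) : bool :=
  [&& S \subset RW, Om \subset S,
      [forall U : {set W}, (U != set0) ==> ((U, set0) \in S)],
      [forall p in S, forall q : {set W} * {set W},
          [&& p.1 \subset q.1, q.2 \subset p.2 & [disjoint q.1 & q.2]]
          ==> (q \in S)] &
      [forall p in S, forall q in S,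
          (p.1 :|: p.2 == q.1 :|: q.2) ==> ((p.1 :&: q.1, p.2 :|: q.2) \in S)]].

Definition Gen (Om : brel) : brel := \bigcap_(S : brel | gen_closed Om S) S.

Definition cba_of (le : rel W) : brel :=
  [set p : {set W} * {set W} | [disjoint p.1 & p.2] &&
           [exists w1 in p.1, forall w2 in p.2, le w1 w2 && ~~ le w2 w1]].

Definition total_preorder (le : rel W) : Prop := total le /\ transitive le.

Definition CBA (G : brel) : Prop :=
  exists le : rel W, total_preorder le /\ G = cba_of le.

Definition is_backbone (G : brel) (s : seq {set W}) : Prop :=
  (forall i, i < size s -> nth set0 s i != set0) /\
  (forall i j, i < size s -> j < size s -> i != j ->
     [disjoint nth set0 s i & nth set0 s j]) /\
  \bigcup_(B <- s) B = [set: W] /\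
  (forall i, i.+1 < size s -> (nth set0 s i, nth set0 s i.+1) \in G) /\
  (forall i, i < size s -> forall X Y : {set W},
     X \subset nth set0 s i -> Y \subset nth set0 s i ->
     X != set0 -> Y != set0 -> [disjoint X & Y] -> (X, Y) \notin G).

(* The (unique, for belief algebras) backbone of G, chosen by description. *)
Definition backbone (G : brel) : seq {set W} :=
  epsilon (inhabits [::]) (is_backbone G).

Definition bsupport (s : seq {set W}) (V : {set W}) : {set W} :=
  nth set0 s (find (fun B : {set W} => ~~ [disjoint B & V]) s).

Definition rank (s : seq {set W}) (w : W) : nat := find (fun B : {set W} => w \in B) s.

Definition Com (G : brel) : brel :=
  cba_of (fun w w' => rank (backbone G) w <= rank (backbone G) w').

Definition bleq (G G' : brel) : Prop := backbone G = backbone G' /\ G \subset G'.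

Section Postulates.
Variable op : brel -> brel -> brel.

Definition RA0 := forall G1 G2, belief_algebra G1 -> belief_algebra G2 ->
  belief_algebra (op G1 G2).
Definition RA1 := forall G1 G2, belief_algebra G1 -> belief_algebra G2 ->
  G2 \subset op G1 G2.
Definition RA2 := forall G1 G2, belief_algebra G1 -> belief_algebra G2 ->
  exists Om : brel, Om \subset G1 :|: G2 /\ op G1 G2 = Gen Om.
Definition RA3 := forall G1 G2, belief_algebra G1 -> belief_algebra G2 ->
  CBA G1 -> CBA G2 -> CBA (op G1 G2).
Definition RA4 := forall G1 G2, belief_algebra G1 -> belief_algebra G2 ->
  CBA G1 -> CBA G2 -> forall w w' : W,
  bsupport (backbone G2) [set w] = bsupport (backbone G2) [set w'] ->
  (([set w], [set w']) \in op G1 G2 <-> ([set w], [set w']) \in G1).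
Definition RA5 := forall G1 G2 G1' G2',
  belief_algebra G1 -> belief_algebra G2 ->
  belief_algebra G1' -> belief_algebra G2' ->
  bleq G1 G1' -> bleq G2 G2' -> op G1 G2 \subset op G1' G2'.
Definition RA6 := forall G1 G2, belief_algebra G1 -> belief_algebra G2 ->
  forall Om : brel, Om \subset G1 :|: G2 ->
  Gen Om \subset op (Com G1) (Com G2) -> op G1 G2 \subset Gen Om ->
  op G1 G2 = Gen Om.

Definition revision_operator : Prop :=
  RA0 /\ RA1 /\ RA2 /\ RA3 /\ RA4 /\ RA5 /\ RA6.
End Postulates.

End BeliefAlgebras.

From mathcomp Require Import all_boot zify.
From Stdlib Require Import ClassicalEpsilon.
Set Implicit Arguments. Unset Strict Implicit. Unset Printing Implicit Defensive.

(* Write Gs for op (Com G1) (Com G2).  A belief algebra lies inside the complete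
   algebra of its backbone ranks, which has the same backbone, so G <= Com G and
   (RA5) gives op G1 G2 \subset Gs; with (RA1) also G2 \subset Gs.  By (RA2),
   op G1 G2 = Gen Om with Om \subset (G1 :|: G2) :&: Gs \subset (G1 :&: Gs) :|: G2,
   hence op G1 G2 \subset Gen ((G1 :&: Gs) :|: G2) \subset Gs, and (RA6) turns the
   first inclusion into an equality.  By (RA3) Gs is complete, and a complete
   algebra is the one induced by the ranks of its own backbone; it compares
   disjoint U and V only through the least ranks met by U and V, i.e. through
   their supports. *)

Section Ranks.
Variable W : finType.
Implicit Types (s : seq {set W}) (U V X : {set W}).

Definition blk s i : {set W} := [set w | rank s w == i].

Definition rank_le s : rel W := fun w w' => rank s w <= rank s w'.

Lemma ComE (G : brel W) : Com G = cba_of (rank_le (backbone G)).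
Proof. by []. Qed.

Lemma mem_cba_rank s U V :
  ((U, V) \in cba_of (rank_le s)) =
  [disjoint U & V] && [exists u in U, forall v in V, rank s u < rank s v].
Proof.
rewrite inE /rank_le; congr (_ && _); apply: eq_existsb => u.
congr (_ && _); apply: eq_forallb => v; congr (_ ==> _).
by rewrite -ltnNge andb_idl //; apply: ltnW.
Qed.

Lemma rank_le_total_preorder s : total_preorder (rank_le s).
Proof. by split=> [w w'|w w' w'']; [apply: leq_total | apply: leq_trans]. Qed.

Lemma exists_rank_ltE s U V u0 v0 :
  u0 \in U -> v0 \in V ->
  {in U, forall u, rank s u0 <= rank s u} -> {in V, forall v, rank s v0 <= rank s v} ->
  [exists u in U, forall v in V, rank s u < rank s v] = (rank s u0 < rank s v0).
Proof.
move=> Uu0 Vv0 minU minV; apply/exists_inP/idP => [[u Uu /forall_inP ltu]|lt0].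
  exact: leq_ltn_trans (minU u Uu) (ltu v0 Vv0).
by exists u0 => //; apply/forall_inP=> v Vv; apply: leq_trans lt0 (minV v Vv).
Qed.

Lemma eq_onto_ranks (f g : W -> nat) n m :
  (forall w, f w < n) -> (forall w, g w < m) ->
  (forall i, i < n -> exists w, f w = i) -> (forall i, i < m -> exists w, g w = i) ->
  (forall w w', (f w <= f w') = (g w <= g w')) -> f =1 g.
Proof.
move=> f_lt g_lt f_onto g_onto fg.
have fg_lt w w' : (f w < f w') = (g w < g w') by rewrite !ltnNge fg.
move=> w; have [k] := ubnP (f w); elim: k w => // k IH w lt_wk.
apply/eqP; rewrite eqn_leq; apply/andP; split.
  have [->//|fw0] := posnP (f w).
  have [v fv] := f_onto (f w).-1 (leq_ltn_trans (leq_pred _) (f_lt w)).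
  have := IH v; have := fg_lt v w; rewrite fv; lia.
rewrite leqNgt; apply/negP=> lt_fg.
have [u gu] := g_onto (f w) (ltn_trans lt_fg (g_lt w)).
have := IH u; have := fg_lt u w; rewrite gu; lia.
Qed.

Lemma mem_bigcup_seq s w :
  (w \in \bigcup_(B <- s) B) = has (fun B : {set W} => w \in B) s.
Proof. by elim: s => [|B s IH]; rewrite ?big_nil ?big_cons ?inE //= IH. Qed.

Lemma disjoint_setDl U V : [disjoint U :\: V & V].
Proof. by rewrite setDE disjoints_subset subsetIr. Qed.

Lemma setUDK U V : V \subset U -> V :|: U :\: V = U.
Proof. by move=> sVU; rewrite -{2}(setID U V) (setIidPr sVU). Qed.

Section Partition.
Variable s : seq {set W}.
Hypothesis s_disjoint : forall i j, i < size s -> j < size s -> i != j ->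
  [disjoint nth set0 s i & nth set0 s j].
Hypothesis s_cover : \bigcup_(B <- s) B = [set: W].
Hypothesis s_neq0 : forall i, i < size s -> nth set0 s i != set0.

Lemma has_mem_blocks w : has (fun B : {set W} => w \in B) s.
Proof. by rewrite -mem_bigcup_seq s_cover inE. Qed.

Lemma rank_lt_size w : rank s w < size s.
Proof. by rewrite /rank -has_find has_mem_blocks. Qed.

Lemma mem_nth_rank w : w \in nth set0 s (rank s w).
Proof. exact: (nth_find set0 (has_mem_blocks w)). Qed.

Lemma nth_blk i : i < size s -> nth set0 s i = blk s i.
Proof.
move=> lt_is; apply/setP=> w; rewrite inE; apply/idP/eqP => [w_i|<-]; last first.
  exact: mem_nth_rank.
apply/eqP; apply: contraT => ne_rank.
have := s_disjoint (rank_lt_size w) lt_is ne_rank.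
by move/disjointFr/(_ (mem_nth_rank w)); rewrite w_i.
Qed.

Lemma rank_onto i : i < size s -> exists w, rank s w = i.
Proof.
move=> lt_is; have /set0Pn[w] := s_neq0 lt_is.
by rewrite nth_blk // inE => /eqP; exists w.
Qed.

Lemma bsupport_blk X x :
  x \in X -> {in X, forall y, rank s x <= rank s y} -> bsupport s X = blk s (rank s x).
Proof.
move=> Xx min_x; set meets := fun B : {set W} => ~~ [disjoint B & X].
have meets_x : meets (nth set0 s (rank s x)).
  by rewrite /meets -setI_eq0; apply/set0Pn; exists x; rewrite inE mem_nth_rank.
have has_meets : has meets s.
  by apply/(has_nthP set0); exists (rank s x); rewrite ?rank_lt_size.
have lt_find : find meets s < size s by rewrite -has_find.
suff find_x : find meets s = rank s x.
  by rewrite /bsupport -/meets find_x nth_blk ?rank_lt_size.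
apply/eqP; rewrite eqn_leq; apply/andP; split.
  by rewrite leqNgt; apply/negP=> /(before_find set0); rewrite meets_x.
have := nth_find set0 has_meets; rewrite /meets -setI_eq0 => /set0Pn[y].
by rewrite inE nth_blk // inE => /andP[/eqP <- Xy]; apply: min_x.
Qed.

Lemma bsupport0 : bsupport s set0 = set0.
Proof.
rewrite /bsupport nth_default // leqNgt -has_find; apply/hasP=> -[B _].
by rewrite -setI_eq0 setI0 eqxx.
Qed.

Lemma mem_cba_bsupport U V : [disjoint U & V] ->
  ((bsupport s U, bsupport s V) \in cba_of (rank_le s)) = ((U, V) \in cba_of (rank_le s)).
Proof.
move=> dUV; rewrite !mem_cba_rank dUV /=.
have blk_min i x : x \in blk s i -> {in blk s i, forall y, rank s x <= rank s y}.
  by rewrite inE => /eqP-> y; rewrite inE => /eqP->.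
have [->|/set0Pn[u1 Uu1]] := eqVneq U set0.
  by rewrite bsupport0; apply/idP/idP => [/andP[_]|] /exists_inP[u]; rewrite inE.
have [u0 Uu0 minU] := @arg_minnP _ u1 (fun u => u \in U) (rank s) Uu1.
have u0_blk : u0 \in blk s (rank s u0) by rewrite inE.
rewrite (bsupport_blk Uu0 minU).
have [->|/set0Pn[v1 Vv1]] := eqVneq V set0.
  rewrite bsupport0 -setI_eq0 setI0 eqxx /=; apply/idP/idP => _; apply/exists_inP.
    by exists u0 => //; apply/forall_inP=> v; rewrite inE.
  by exists u0 => //; apply/forall_inP=> v; rewrite inE.
have [v0 Vv0 minV] := @arg_minnP _ v1 (fun v => v \in V) (rank s) Vv1.
have v0_blk : v0 \in blk s (rank s v0) by rewrite inE.
rewrite (bsupport_blk Vv0 minV) (exists_rank_ltE Uu0 Vv0 minU minV).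
rewrite (exists_rank_ltE u0_blk v0_blk (blk_min _ _ u0_blk) (blk_min _ _ v0_blk)).
apply/andb_idl=> lt_uv; rewrite -setI_eq0; apply/eqP/setP=> w; rewrite !inE; lia.
Qed.

End Partition.
End Ranks.

Section Gen.
Variable W : finType.
Implicit Types Om S : brel W.

Lemma Gen_min Om S : gen_closed Om S -> Gen Om \subset S.
Proof. exact: bigcap_inf. Qed.

Lemma sub_Gen Om : Om \subset Gen Om.
Proof.
apply/subsetP=> p Om_p; apply/bigcapP=> S /and5P[_ /subsetP Om_S _ _ _].
exact: Om_S.
Qed.

Lemma GenS Om Om' : Om \subset Om' -> Gen Om \subset Gen Om'.
Proof.
move=> sOm; apply/subsetP=> p /bigcapP Gen_p; apply/bigcapP=> S.
by case/and5P=> RW_S /(subset_trans sOm) Om_S *; apply: Gen_p; apply/and5P.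
Qed.

End Gen.

Section BeliefAlgebra.
Variable W : finType.
Variable G : brel W.
Hypothesis HG : belief_algebra G.
Implicit Types U V X Y D B T : {set W}.

Lemma ba_set0 U : (U, set0) \in G <-> U != set0.
Proof. by case: HG => _ [A1 _]; apply: A1. Qed.

Lemma ba_weaken U V U1 V1 :
  U \subset U1 -> (U, V) \in G -> V1 \subset V -> [disjoint U1 & V1] -> (U1, V1) \in G.
Proof. by case: HG => _ [_ [_ [A3 _]]]; apply: A3. Qed.

Lemma ba_meet U U1 V1 U2 V2 : U = U1 :|: V1 -> U = U2 :|: V2 ->
  (U1, V1) \in G -> (U2, V2) \in G -> (U1 :&: U2, V1 :|: V2) \in G.
Proof. by case: HG => _ [_ [_ [_ A4]]]; apply: A4. Qed.

Lemma ba_disjoint U V : (U, V) \in G -> [disjoint U & V].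
Proof. by case: HG => /subsetP RW_G _ /RW_G; rewrite inE. Qed.

Lemma ba_neq0 U V : (U, V) \in G -> U != set0.
Proof.
move=> GUV; apply: contraTneq GUV => ->; apply/negP => G0V.
have G00 : (set0, set0) \in G.
  by apply: (ba_weaken (sub0set _) G0V (sub0set _)); rewrite -setI_eq0 setI0.
by move/ba_set0: G00; rewrite eqxx.
Qed.

Lemma gen_closed_ba (Om : brel W) : Om \subset G -> gen_closed Om G.
Proof.
move=> Om_G; case: HG => RW_G _; apply/and5P; split=> //.
- by apply/forall_inP=> U /ba_set0.
- apply/forall_inP=> -[U V] GUV; apply/forallP=> -[U1 V1] /=.
  by apply/implyP=> /and3P[sU sV dUV]; apply: (ba_weaken sU GUV sV dUV).
- apply/forall_inP=> -[U1 V1] G1; apply/forall_inP=> -[U2 V2] G2 /=.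
  by apply/implyP=> /eqP E; apply: ba_meet E G1 G2.
Qed.

Lemma ba_extend_r X Y T : [disjoint X & Y] -> [disjoint X & T] -> [disjoint Y & T] ->
  (X, Y) \in G -> (Y, T) \in G -> (X, Y :|: T) \in G.
Proof.
move=> dXY dXT dYT GXY GYT.
have GXT_Y : (X :|: T, Y) \in G.
  apply: (ba_weaken (subsetUl X T) GXY) => //.
  by rewrite -setI_eq0 setIUl setU_eq0 !setI_eq0 dXY disjoint_sym dYT.
have GXY_T : (X :|: Y, T) \in G.
  apply: (ba_weaken (subsetUr X Y) GYT) => //.
  by rewrite -setI_eq0 setIUl setU_eq0 !setI_eq0 dXT dYT.
have := ba_meet _ (erefl _) GXT_Y GXY_T.
by rewrite -setUIr setIC (disjoint_setI0 dYT) setU0 setUAC; apply.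
Qed.

Definition incomparable_in B := forall X Y, X \subset B -> Y \subset B ->
  X != set0 -> Y != set0 -> [disjoint X & Y] -> (X, Y) \notin G.

Definition backbone_on D (s : seq {set W}) : Prop :=
  (forall i, i < size s -> nth set0 s i != set0) /\
  (forall i j, i < size s -> j < size s -> i != j ->
     [disjoint nth set0 s i & nth set0 s j]) /\
  \bigcup_(B <- s) B = D /\
  (forall i, i.+1 < size s -> (nth set0 s i, nth set0 s i.+1) \in G) /\
  (forall i, i < size s -> incomparable_in (nth set0 s i)).

Lemma backbone_on_nil : backbone_on set0 [::].
Proof. by do 2!split=> //; rewrite big_nil. Qed.

Lemma backbone_on_cons D B s :
  B \subset D -> B != set0 -> (B, D :\: B) \in G -> incomparable_in B ->
  backbone_on (D :\: B) s -> backbone_on D (B :: s).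
Proof.
move=> sBD B0 G_B inc_B [s0 [s_disj [s_cover [s_cons s_inc]]]].
have s_sub i : i < size s -> nth set0 s i \subset D :\: B.
  move=> lt_is; rewrite -s_cover; apply/subsetP=> x x_i.
  by rewrite mem_bigcup_seq; apply/hasP; exists (nth set0 s i); rewrite ?mem_nth.
have disj_B i : i < size s -> [disjoint B & nth set0 s i].
  by move=> /s_sub s_i; rewrite disjoint_sym (disjointWl s_i (disjoint_setDl D B)).
split; [|split; [|split; [|split]]].
- by case.
- case=> [|i] [|j] //= lt_i lt_j ne_ij; first exact: disj_B.
    by rewrite disjoint_sym; apply: disj_B.
  exact: s_disj.
- by rewrite big_cons s_cover setUDK.
- case=> [|i] /= lt_i; last exact: s_cons.
  exact: (ba_weaken (subxx B) G_B (s_sub 0 lt_i) (disj_B 0 lt_i)).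
- by case=> [|i] //= /s_inc.
Qed.

Definition is_cut D T := [&& T \subset D, T != set0 & (T, D :\: T) \in G].

Definition min_cut D := [arg min_(T < D | is_cut D T) #|T|].

Lemma min_cutP D : D != set0 ->
  is_cut D (min_cut D) /\ forall T, is_cut D T -> #|min_cut D| <= #|T|.
Proof.
move=> D0; have cut_D : is_cut D D by rewrite /is_cut subxx D0 setDv; apply/ba_set0.
by rewrite /min_cut; case: arg_minnP.
Qed.

(* A comparable pair X, Y inside the minimal cut M would make M :\: Y a smaller cut. *)
Lemma min_cut_incomparable D : D != set0 -> incomparable_in (min_cut D).
Proof.
move=> D0 X Y sXM sYM X0 Y0 dXY; apply/negP=> G_XY.
have [/and3P[sMD M0 G_M] min_M] := min_cutP D0.
set M := min_cut D in sXM sYM sMD M0 G_M min_M.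
have sYD : Y \subset D := subset_trans sYM sMD.
have G_DY : (D :\: Y, Y) \in G.
  apply: (ba_weaken _ G_XY (subxx Y)); last exact: disjoint_setDl.
  by rewrite subsetD (subset_trans sXM sMD).
have D_Y : D = D :\: Y :|: Y by rewrite setUC setUDK.
have := ba_meet D_Y (esym (setUDK sMD)) G_DY G_M.
rewrite setIDAC (setIidPr sMD).
have -> : Y :|: D :\: M = D :\: (M :\: Y) by rewrite setDDr (setIidPr sYD) setUC.
move=> G_MY; have sXMY : X \subset M :\: Y by rewrite subsetD sXM.
have MY0 : M :\: Y != set0 by apply: contraNneq X0 => MY0; rewrite -subset0 -MY0.
have cut_MY : is_cut D (M :\: Y).
  by rewrite /is_cut G_MY MY0 (subset_trans (subsetDl M Y) sMD).
have := min_M _ cut_MY.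
by rewrite cardsDS // leqNgt ltn_subrL !card_gt0 Y0 M0.
Qed.

Fixpoint greedy_backbone n D : seq {set W} :=
  if n is n'.+1 then
    if D == set0 then [::] else min_cut D :: greedy_backbone n' (D :\: min_cut D)
  else [::].

Lemma greedy_backbone_on n D : #|D| <= n -> backbone_on D (greedy_backbone n D).
Proof.
elim: n D => [|n IH] D /=.
  by rewrite leqn0 cards_eq0 => /eqP->; apply: backbone_on_nil.
case: eqVneq => [-> _|D0 le_Dn]; first exact: backbone_on_nil.
have [/and3P[sMD M0 G_M] _] := min_cutP D0.
apply: backbone_on_cons => //; first exact: min_cut_incomparable.
by apply: IH; move: M0; rewrite cardsDS // -card_gt0; lia.
Qed.

Lemma backboneP : is_backbone G (backbone G).
Proof.
apply: (epsilon_spec (inhabits [::]) (is_backbone G)).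
by exists (greedy_backbone #|W| [set: W]); apply: greedy_backbone_on; apply: max_card.
Qed.

Section BackboneRanks.
Variable s : seq {set W}.
Hypothesis Hs : is_backbone G s.

Let s_disjoint := proj1 (proj2 Hs).
Let s_cover := proj1 (proj2 (proj2 Hs)).

Lemma backbone_blk_up i : i < size s -> (blk s i, [set w | i < rank s w]) \in G.
Proof.
case: Hs => s0 [_ [_ [s_cons _]]].
suff blk_up k j : j + k.+1 = size s -> (blk s j, [set w | j < rank s w]) \in G.
  by move=> lt_is; apply: (blk_up (size s - i.+1)); lia.
elim: k j => [|k IH] j Esz.
  have -> : [set w | j < rank s w] = set0.
    by apply/setP=> w; rewrite !inE; have := rank_lt_size s_cover w; lia.
  by apply/ba_set0; rewrite -nth_blk ?s0 //; lia.
have -> : [set w | j < rank s w] = blk s j.+1 :|: [set w | j.+1 < rank s w].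
  by apply/setP=> w; rewrite !inE; lia.
have lt_j1 : j.+1 < size s by lia.
have G_jj1 : (blk s j, blk s j.+1) \in G.
  by rewrite -!nth_blk ?(ltnW lt_j1) //; apply: s_cons.
apply: (ba_extend_r _ _ _ G_jj1 (IH j.+1 _)); last by lia.
all: by rewrite -setI_eq0; apply/eqP/setP=> w; rewrite !inE; lia.
Qed.

Lemma ba_rank_lt U V : (U, V) \in G ->
  exists2 u, u \in U & forall v, v \in V -> rank s u < rank s v.
Proof.
move=> G_UV; have [V0|/set0Pn[v1 Vv1]] := eqVneq V set0.
  by have /set0Pn[u Uu] := ba_neq0 G_UV; exists u => // v; rewrite V0 inE.
have [v0 Vv0 min_v0] := @arg_minnP _ v1 (fun v => v \in V) (rank s) Vv1.
set i := rank s v0.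
have [/exists_inP[u Uu lt_ui]|no_u] := boolP [exists u in U, rank s u < i].
  by exists u => // v /min_v0; apply: leq_trans.
exfalso; case: Hs => _ [_ [_ [_ s_inc]]].
have U_ge u : u \in U -> i <= rank s u.
  by move=> Uu; rewrite leqNgt; apply: contra no_u => lt_ui; apply/exists_inP; exists u.
set up := [set w | i <= rank s w].
have G_upV : (up :\: V, V) \in G.
  apply: (ba_weaken _ G_UV (subxx V) (disjoint_setDl _ _)); apply/subsetP=> u Uu.
  by rewrite !inE U_ge // andbT (disjointFr (ba_disjoint G_UV) Uu).
have up_V : up = up :\: V :|: V.
  by rewrite setUC setUDK //; apply/subsetP=> v /min_v0; rewrite inE.
have up_i : up = blk s i :|: [set w | i < rank s w] by apply/setP=> w; rewrite !inE; lia.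
have lt_is : i < size s := rank_lt_size s_cover v0.
have := ba_meet up_V up_i G_upV (backbone_blk_up lt_is).
set X := (up :\: V) :&: blk s i; set Y := V :&: blk s i => G_XY'.
have dXY : [disjoint X & Y].
  exact: disjointW (subsetIl _ _) (subsetIl _ _) (disjoint_setDl up V).
have G_XY : (X, Y) \in G.
  exact: (ba_weaken (subxx X) G_XY' (subset_trans (subsetIl _ _) (subsetUl _ _)) dXY).
have sX : X \subset nth set0 s i by rewrite nth_blk // subsetIr.
have sY : Y \subset nth set0 s i by rewrite nth_blk // subsetIr.
have Y0 : Y != set0 by apply/set0Pn; exists v0; rewrite !inE Vv0 /=.
by move/negP: (s_inc i lt_is X Y sX sY (ba_neq0 G_XY) Y0 dXY).
Qed.
End BackboneRanks.
End BeliefAlgebra.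

Section CompleteBeliefAlgebras.
Variables (W : finType) (le : rel W).
Hypothesis le_tp : total_preorder le.

Lemma cba_belief_algebra : belief_algebra (cba_of le).
Proof.
case: le_tp => le_tot le_tr.
split; [|split; [|split; [|split]]].
- by apply/subsetP=> -[U V]; rewrite !inE => /andP[].
- move=> U; rewrite inE -setI_eq0 setI0 eqxx /=; split.
    by case/exists_inP=> w Uw _; apply/set0Pn; exists w.
  case/set0Pn=> w Uw; apply/exists_inP; exists w => //.
  by apply/forall_inP=> x; rewrite inE.
- move=> U V; rewrite !inE => /andP[_ /exists_inP[u Uu /forall_inP u_lt]].
  apply/negP=> /andP[_ /exists_inP[v Vv /forall_inP v_lt]].
  by case/andP: (u_lt v Vv) => _ /negP[]; case/andP: (v_lt u Uu).
- move=> U V U1 V1 sUU1; rewrite !inE.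
  move=> /andP[_ /exists_inP[u Uu /forall_inP u_lt]] sV1V ->.
  apply/exists_inP; exists u; first exact: (subsetP sUU1).
  by apply/forall_inP=> x /(subsetP sV1V); apply: u_lt.
- move=> U U1 V1 U2 V2 E1 E2; rewrite !inE.
  case/andP=> d1 /exists_inP[w1 Uw1 /forall_inP lt1].
  case/andP=> d2 /exists_inP[w2 Uw2 /forall_inP lt2].
  rewrite -setI_eq0 setIUr setU_eq0 !setI_eq0.
  rewrite (disjointWl (subsetIl _ _) d1) (disjointWl (subsetIr _ _) d2) /=.
  wlog le12 : U1 V1 U2 V2 w1 w2 E1 E2 d1 d2 Uw1 Uw2 lt1 lt2 / le w1 w2.
    move=> gen; case/orP: (le_tot w1 w2) => [|le21]; first exact: gen.
    by rewrite setIC setUC; apply: (gen U2 V2 U1 V1 w2 w1).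
  have U2w1 : w1 \in U2.
    have : w1 \in U2 :|: V2 by rewrite -E2 E1 inE Uw1.
    by rewrite inE => /orP[// | /lt2 /andP[_ /negP[]]].
  apply/exists_inP; exists w1; first by rewrite inE Uw1.
  apply/forall_inP=> x; rewrite inE => /orP[/lt1 // | /lt2 /andP[le2x not_x2]].
  rewrite (le_tr _ _ _ le12 le2x); apply: contra not_x2 => le_x1.
  exact: le_tr _ _ _ le_x1 le12.
Qed.

Lemma cba_set1 w w' : ~~ le w' w -> ([set w], [set w']) \in cba_of le.
Proof.
case: le_tp => le_tot _ not_le; have ne_ww' : w != w'.
  by apply: contraNneq not_le => ->; case/orP: (le_tot w' w').
rewrite inE disjoints1 inE ne_ww'; apply/exists_inP; exists w; rewrite ?inE //.
apply/forall_inP=> x; rewrite inE => /eqP->; rewrite not_le andbT.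
by case/orP: (le_tot w w') => //; rewrite (negbTE not_le).
Qed.

Section Backbone.
Variable s : seq {set W}.
Hypothesis Hs : is_backbone (cba_of le) s.

Let s_disjoint := proj1 (proj2 Hs).
Let s_cover := proj1 (proj2 (proj2 Hs)).

Lemma cba_le_same_rank w w' : rank s w = rank s w' -> le w w'.
Proof.
case: Hs => _ [_ [_ [_ s_inc]]] E_ww'; apply: contraT => /cba_set1 G_w'w.
have lt_ws := rank_lt_size s_cover w.
have in_blk x : rank s x = rank s w -> [set x] \subset nth set0 s (rank s w).
  by move=> E_x; rewrite sub1set nth_blk // inE E_x.
have set1_neq0 (x : W) : [set x] != set0 by apply/set0Pn; exists x; rewrite inE.
have := s_inc _ lt_ws _ _ (in_blk w' (esym E_ww')) (in_blk w erefl)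
  (set1_neq0 w') (set1_neq0 w) (ba_disjoint cba_belief_algebra G_w'w).
by rewrite G_w'w.
Qed.

Lemma cba_rank_le : le =2 rank_le s.
Proof.
case: le_tp => _ le_tr w w'; apply/idP/idP => [le_ww'|].
  rewrite /rank_le leqNgt; apply/negP=> lt_w'w.
  have := backbone_blk_up cba_belief_algebra Hs (rank_lt_size s_cover w').
  rewrite inE => /andP[_ /exists_inP[x x_blk /forall_inP x_lt]].
  have w_up : w \in [set x | rank s w' < rank s x] by rewrite inE.
  have /andP[_ /negP[]] := x_lt w w_up.
  apply: le_tr le_ww' _; apply: cba_le_same_rank.
  by move: x_blk; rewrite inE => /eqP->.
apply: contraTT => /cba_set1 G_w'w.
have [u] := ba_rank_lt cba_belief_algebra Hs G_w'w.
by rewrite inE => /eqP-> /(_ w (set11 w)); rewrite /rank_le -ltnNge.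
Qed.

Lemma cba_of_rank : cba_of le = cba_of (rank_le s).
Proof.
apply/setP=> -[U V]; rewrite !inE; congr (_ && _); apply: eq_existsb => u.
by congr (_ && _); apply: eq_forallb => v; rewrite !cba_rank_le.
Qed.

End Backbone.

Lemma cba_backbone_unique s t :
  is_backbone (cba_of le) s -> is_backbone (cba_of le) t -> s = t.
Proof.
move=> Hs Ht; have [s0 [s_disj [s_cover _]]] := Hs; have [t0 [t_disj [t_cover _]]] := Ht.
have rank_st : rank s =1 rank t.
  apply: (eq_onto_ranks (rank_lt_size s_cover) (rank_lt_size t_cover)).
  - exact: rank_onto.
  - exact: rank_onto.
  - by move=> w w'; apply: etrans (esym (cba_rank_le Hs w w')) (cba_rank_le Ht w w').
have size_st : size s = size t.
  apply/anti_leq/andP; split; rewrite leqNgt; apply/negP.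
    move=> /(rank_onto s_disj s_cover s0)[w rank_w].
    by have := rank_lt_size t_cover w; rewrite -rank_st rank_w ltnn.
  move=> /(rank_onto t_disj t_cover t0)[w rank_w].
  by have := rank_lt_size s_cover w; rewrite rank_st rank_w ltnn.
apply: (eq_from_nth (x0 := set0) size_st) => i lt_is.
rewrite (nth_blk s_disj s_cover lt_is) (nth_blk t_disj t_cover) -?size_st //.
by apply/setP=> w; rewrite !inE rank_st.
Qed.
End CompleteBeliefAlgebras.

Section Completion.
Variable W : finType.
Implicit Types G : brel W.

Lemma Com_CBA G : CBA (Com G).
Proof. by exists (rank_le (backbone G)); split; first exact: rank_le_total_preorder. Qed.

Lemma Com_belief_algebra G : belief_algebra (Com G).
Proof. exact: cba_belief_algebra (rank_le_total_preorder _). Qed.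

Lemma sub_Com G : belief_algebra G -> G \subset Com G.
Proof.
move=> HG; apply/subsetP=> -[U V] G_UV; rewrite ComE mem_cba_rank (ba_disjoint HG G_UV).
have [u Uu u_lt] := ba_rank_lt HG (backboneP HG) G_UV.
by apply/exists_inP; exists u => //; apply/forall_inP.
Qed.

Lemma backbone_Com G : belief_algebra G -> backbone (Com G) = backbone G.
Proof.
move=> HG; have := backboneP HG; set s := backbone G => Hs.
have [s0 [s_disj [s_cover _]]] := Hs.
apply: esym (cba_backbone_unique (rank_le_total_preorder s) _
  (backboneP (Com_belief_algebra G))).
split; [done | split; [done | split; [done | split]]].
- move=> i lt_i1; have lt_i := ltnW lt_i1.
  have /set0Pn[x] := s0 i lt_i; rewrite mem_cba_rank !nth_blk // inE => /eqP x_i.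
  apply/andP; split; first by rewrite -setI_eq0; apply/eqP/setP=> w; rewrite !inE; lia.
  apply/exists_inP; exists x; rewrite ?inE ?x_i //.
  by apply/forall_inP=> y; rewrite inE => /eqP->.
- move=> i lt_is X Y sX sY _ /set0Pn[y Yy] _; rewrite mem_cba_rank.
  apply/negP=> /andP[_ /exists_inP[x Xx /forall_inP x_lt]]; have := x_lt y Yy.
  move: (subsetP sX x Xx) (subsetP sY y Yy); rewrite nth_blk // !inE => /eqP-> /eqP->.
  by rewrite ltnn.
Qed.

Lemma bleq_Com G : belief_algebra G -> bleq G (Com G).
Proof. by move=> HG; split; [rewrite backbone_Com | apply: sub_Com]. Qed.

End Completion.

Theorem proposition3 (W : finType) (HW : 0 < #|W|)
  (op : brel W -> brel W -> brel W) (Hop : revision_operator op)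
  (G1 G2 : brel W) (H1 : belief_algebra G1) (H2 : belief_algebra G2) :
  let Gs := op (Com G1) (Com G2) in
  op G1 G2 = Gen ((G1 :&: Gs) :|: G2) /\
  G1 :&: Gs =
    [set p | (p \in G1) &&
             ((bsupport (backbone Gs) p.1, bsupport (backbone Gs) p.2) \in Gs)].
Proof.
move=> Gs; case: Hop => RA0 [RA1 [RA2 [RA3 [_ [RA5 RA6]]]]].
have HC1 := Com_belief_algebra G1; have HC2 := Com_belief_algebra G2.
have HGs : belief_algebra Gs := RA0 _ _ HC1 HC2.
have op_Gs : op G1 G2 \subset Gs by apply: RA5 => //; apply: bleq_Com.
split.
  have [Om [Om_sub opE]] := RA2 _ _ H1 H2.
  have G2_Gs : G2 \subset Gs := subset_trans (RA1 _ _ H1 H2) op_Gs.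
  have Om_Gs : Om \subset Gs by rewrite (subset_trans (sub_Gen Om)) // -opE.
  apply: RA6 => //; first by rewrite setSU ?subsetIl.
    by apply/Gen_min/gen_closed_ba; rewrite // subUset subsetIr G2_Gs.
  rewrite opE; apply: GenS; apply/subsetP=> p Om_p.
  by have := subsetP Om_sub p Om_p; rewrite !inE (subsetP Om_Gs p Om_p) andbT.
have [le [le_tp GsE]] : CBA Gs := RA3 _ _ HC1 HC2 (Com_CBA G1) (Com_CBA G2).
have := backboneP HGs; set s := backbone Gs; rewrite {1}GsE => Hs.
have {}GsE : Gs = cba_of (rank_le s) by rewrite GsE (cba_of_rank le_tp Hs).
have [_ [s_disj [s_cover _]]] := Hs.
apply/setP=> -[U V]; rewrite !inE /=; case G1_UV: ((U, V) \in G1) => //=.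
by rewrite GsE (mem_cba_bsupport s_disj s_cover (ba_disjoint H1 G1_UV)).
Qed.
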